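(* Let $p,q$ be positive integers, $e\in\mathbb{R}^p$ the vector of all ones, and let $(z,w)\in\mathbb{R}^p\times\mathbb{R}^q$ satisfy $z^+\not\ge\|w\|e$ and $\langle z^-,e\rangle<\|w\|$. For $\lambda\ge0$ let $N(\lambda):=\operatorname{diag}\big(-\operatorname{sgn}([(\lambda+1)z-\|w\|e]^-)\big)$. Given $\lambda_0>0$, define the sequence $\{\lambda_k\}$ by $N_k:=N(\lambda_k)$ and $$\big[-\|w\|+\langle e,N_kz\rangle\big]\lambda_{k+1}=-\langle e,N_k[z-\|w\|e]\rangle,\qquad k=0,1,\ldots.$$ Then for any $\lambda_0>0$ the sequence $\{\lambda_k\}$ is well defined and converges after at most $2^p$ steps to the unique solution $\lambda_*>0$ of the equation $$\lambda\|w\|=\left\langle e,[(\lambda+1)z-\|w\|e]^-\right\rangle.$$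
   Context: For $\alpha\in\mathbb{R}$, $\alpha^+:=\max(\alpha,0)$ and $\alpha^-:=\max(-\alpha,0)$; for vectors $z^+$, $z^-$ and $\operatorname{sgn}(z)$ are taken componentwise (with $\operatorname{sgn}(0)=0$), and $\operatorname{diag}(z)$ is the diagonal matrix with diagonal $z_1,\dots,z_p$. The order $\ge$ is componentwise; $z^+\not\ge\|w\|e$ means that $z^+\ge\|w\|e$ fails. (This sequence is the semi-smooth Newton method for the convex piecewise linear function $\psi(\lambda)=-\lambda\|w\|+\langle e,[(\lambda+1)z-\|w\|e]^-\rangle$.) *)

From HB Require Import structures.
From mathcomp Require Import all_boot all_order all_algebra.
From mathcomp Require Import reals.
Set Implicit Arguments. Unset Strict Implicit. Unset Printing Implicit Defensive.
Import Order.TTheory GRing.Theory Num.Theory.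
Local Open Scope ring_scope.

Section Defs.
Variable R : realType.

Definition posp (a : R) : R := Num.max a 0.
Definition negp (a : R) : R := Num.max (- a) 0.

Definition vpos n (z : 'cV[R]_n) : 'cV[R]_n := map_mx posp z.
Definition vneg n (z : 'cV[R]_n) : 'cV[R]_n := map_mx negp z.
Definition vsgn n (z : 'cV[R]_n) : 'cV[R]_n := map_mx (fun a => Num.sg a) z.

Definition onesv n : 'cV[R]_n := const_mx 1.

Definition dotv n (u v : 'cV[R]_n) : R := \sum_(i < n) u i 0 * v i 0.
Definition enorm n (w : 'cV[R]_n) : R := Num.sqrt (dotv w w).

Definition diagv n (z : 'cV[R]_n) : 'M[R]_n := diag_mx z^T.

(* N(lambda) = diag(- sgn([(lambda+1) z - c e]^-)), with c = ||w|| *)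
Definition Nmat p (z : 'cV[R]_p) (c lam : R) : 'M[R]_p :=
  diagv (- vsgn (vneg ((lam + 1) *: z - c *: onesv p))).

Definition ncoef p (z : 'cV[R]_p) (c lam : R) : R :=
  - c + dotv (onesv p) (Nmat z c lam *m z).

Definition nrhs p (z : 'cV[R]_p) (c lam : R) : R :=
  - dotv (onesv p) (Nmat z c lam *m (z - c *: onesv p)).

(* the sequence lambda_k: lambda_{k+1} = rhs / coef (well defined when coef <> 0) *)
Fixpoint newton_seq p (z : 'cV[R]_p) (c lam0 : R) (k : nat) : R :=
  match k with
  | O => lam0
  | S k' => let l := newton_seq z c lam0 k' in nrhs z c l / ncoef z c l
  end.

End Defs.

From HB Require Import structures.
From mathcomp Require Import all_boot all_order all_algebra.
From mathcomp Require Import reals ring lra.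
Import Order.TTheory GRing.Theory Num.Theory.
Set Implicit Arguments. Unset Strict Implicit.
Local Open Scope ring_scope.

(** With [c = ||w||] the root equation reads [psi l = 0], where
    [psi l = - l c + sum_i [(l + 1) z_i - c]^-].  For a set [S] of indices,
    [piece S] is the affine function [l |-> sum_(i in S) (c - (l + 1) z_i) - l c];
    [psi] is the maximum of the pieces, attained at the active set
    [A l = {i | (l + 1) z_i < c}], and the Newton step from [l] is the root of
    [piece (A l)].  Since [<z^-, e> < c], every piece has negative slope: so
    [psi] is strictly decreasing, and [psi >= 0] at every Newton iterate
    [l_1, l_2, ...], which therefore increase while their active sets shrink.
    Once an active set repeats the iteration is stationary, and a strictly
    shrinking chain of subsets of a [p]-element set has at most [p + 1 <= 2 ^ p]
    members. *)

Lemma negpE (R : realType) (x : R) : negp x = if x < 0 then - x else 0.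
Proof.
rewrite /negp; case: ltrP => hx; first by apply/max_idPl; lra.
by apply/max_idPr; lra.
Qed.

Lemma dotv_onesl (R : realType) n (u : 'cV[R]_n) :
  dotv (onesv R n) u = \sum_i u i 0.
Proof. by apply: eq_bigr => i _; rewrite mxE mul1r. Qed.

Section SemismoothNewton.
Variables (R : realType) (p : nat) (z : 'cV[R]_p) (c : R).
Implicit Types (l m : R) (S : {set 'I_p}).

Definition active (l : R) : {set 'I_p} := [set i | (l + 1) * z i 0 < c].

Definition slope (S : {set 'I_p}) : R := - c - \sum_(i in S) z i 0.
Definition intercept (S : {set 'I_p}) : R := \sum_(i in S) (c - z i 0).
Definition piece (S : {set 'I_p}) (l : R) : R := intercept S + l * slope S.

Definition psi (l : R) : R :=
  - l * c + dotv (onesv R p) (vneg ((l + 1) *: z - c *: onesv R p)).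

Definition newton_step (l : R) : R :=
  - intercept (active l) / slope (active l).

Lemma sum_piece S l :
  \sum_(i in S) (c - (l + 1) * z i 0) - l * c = piece S l.
Proof.
rewrite /piece /intercept /slope.
have -> : \sum_(i in S) (c - (l + 1) * z i 0) =
          \sum_(i in S) (c - z i 0) - l * \sum_(i in S) z i 0.
  by rewrite mulr_sumr -sumrB; apply: eq_bigr => i _; ring.
ring.
Qed.

Lemma psi_active l : psi l = piece (active l) l.
Proof.
rewrite /psi dotv_onesl -sum_piece addrC mulNr [in RHS]big_mkcond /=.
congr (_ - _); apply: eq_bigr => i _.
by rewrite /vneg !mxE negpE inE; case: ltrP => h; case: ltrP => h'; lra.
Qed.

Lemma piece_le_psi S l : piece S l <= psi l.
Proof.
rewrite psi_active -!sum_piece lerD2r big_mkcond [leRHS]big_mkcond /=.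
apply: ler_sum => i _.
by rewrite inE; case: (i \in S); case: ltrP => h; lra.
Qed.

Lemma Nmat_mulE l (v : 'cV[R]_p) i :
  (Nmat z c l *m v) i 0 = if i \in active l then - v i 0 else 0.
Proof.
rewrite /Nmat /diagv mul_diag_mx !mxE negpE inE.
case: ltrP => h; case: ltrP => h'; try lra.
  by rewrite gtr0_sg ?mulN1r //; lra.
by rewrite sgr0 oppr0 mul0r.
Qed.

Lemma ncoefE l : ncoef z c l = slope (active l).
Proof.
rewrite /ncoef /slope dotv_onesl -sumrN [in RHS]big_mkcond /=.
congr (_ + _); apply: eq_bigr => i _.
by rewrite Nmat_mulE; case: ifP; rewrite ?oppr0.
Qed.

Lemma nrhsE l : nrhs z c l = - intercept (active l).
Proof.
rewrite /nrhs /intercept dotv_onesl [in RHS]big_mkcond /=.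
congr (- _); apply: eq_bigr => i _.
by rewrite Nmat_mulE !mxE; case: ifP => // _; lra.
Qed.

Lemma newton_seqE l0 k : newton_seq z c l0 k = iter k newton_step l0.
Proof. by elim: k => //= k ->; rewrite nrhsE ncoefE. Qed.

Lemma eq_newton_step l m : active l = active m -> newton_step l = newton_step m.
Proof. by rewrite /newton_step => ->. Qed.

Lemma slope_lt0_of_vneg :
  dotv (vneg z) (onesv R p) < c -> forall S, slope S < 0.
Proof.
move=> vneg_lt S; rewrite /slope -sumrN.
suff : \sum_(i in S) - z i 0 <= dotv (vneg z) (onesv R p) by lra.
rewrite big_mkcond /=; apply: ler_sum => i _.
by rewrite !mxE mulr1 negpE; case: (i \in S); case: ltrP => h; lra.
Qed.

Lemma exists_lt_of_not_vpos_ge :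
  ~ (forall i, c <= vpos z i 0) -> exists i, z i 0 < c.
Proof.
move=> not_ge; have /existsP[i] : [exists i, ~~ (c <= vpos z i 0)].
  by rewrite -negb_forall; apply/negP => /forallP.
by rewrite -ltNge mxE /posp gt_max => /andP[zi _]; exists i.
Qed.

Lemma psi0_gt0 i : z i 0 < c -> 0 < psi 0.
Proof.
move=> zi; rewrite psi_active /piece mul0r addr0 /intercept (bigD1 i) ?inE /=.
  rewrite ltr_pwDl ?subr_gt0 // sumr_ge0 // => j /andP[]; rewrite inE.
  by rewrite add0r mul1r subr_ge0 => /ltW.
by rewrite add0r mul1r.
Qed.

Hypothesis c_ge0 : 0 <= c.

Lemma active_antitone l m : 0 <= l -> l <= m -> active m \subset active l.
Proof.
move=> l_ge0 lm; apply/subsetP => i; rewrite !inE.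
case: (ltrP (z i 0) 0) => zi.
  by move=> _; apply: lt_le_trans c_ge0; rewrite pmulr_rlt0 //; lra.
by apply: le_lt_trans; apply: ler_wpM2r => //; lra.
Qed.

Lemma intercept_active_ge0 l : 0 <= l -> 0 <= intercept (active l).
Proof.
move=> l_ge0; apply: sumr_ge0 => i; rewrite inE => zi.
rewrite subr_ge0; case: (ltrP (z i 0) 0) => zi0.
  exact: le_trans (ltW zi0) c_ge0.
apply: ltW (le_lt_trans _ zi); rewrite mulrDl mul1r lerDr.
exact: mulr_ge0.
Qed.

Hypothesis slope_lt0 : forall S, slope S < 0.

Lemma piece_newton_root S : piece S (- intercept S / slope S) = 0.
Proof. by have := slope_lt0 S; rewrite /piece => ?; field; lra. Qed.

Lemma psi_newton_step_ge0 l : 0 <= psi (newton_step l).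
Proof. by rewrite -(piece_newton_root (active l)); apply: piece_le_psi. Qed.

Lemma le_newton_step l : 0 <= psi l -> l <= newton_step l.
Proof.
rewrite psi_active /piece /newton_step ler_ndivlMr // => ?; lra.
Qed.

Lemma newton_step_ge0 l : 0 <= l -> 0 <= newton_step l.
Proof.
move=> /intercept_active_ge0 b_ge0; apply: mulr_le0; first by rewrite oppr_le0.
by rewrite ltW ?invr_lt0.
Qed.

Lemma psi_eq0_of_fixed l : newton_step l = l -> psi l = 0.
Proof. by move=> fixed_l; rewrite psi_active -{2}fixed_l piece_newton_root. Qed.

Lemma psi_decreasing : {homo psi : l m / l < m >-> m < l}.
Proof.
move=> l m lm; rewrite psi_active.
apply: (lt_le_trans _ (piece_le_psi (active m) l)).
by rewrite /piece ltrD2l ltr_nM2r.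
Qed.

Lemma ler_psi : {mono psi : l m /~ l <= m}.
Proof. by apply: le_nmono => l m; apply: psi_decreasing. Qed.

Lemma ltr_psi : {mono psi : l m /~ l < m}.
Proof. exact: leW_nmono ler_psi. Qed.

Lemma psi_inj : injective psi.
Proof. exact: dec_inj ler_psi. Qed.

Variable lam0 : R.
Hypothesis lam0_ge0 : 0 <= lam0.
Local Notation lam k := (iter k newton_step lam0).

Lemma newton_iter_ge0 k : 0 <= lam k.
Proof. by elim: k => //= k; apply: newton_step_ge0. Qed.

Lemma newton_iter_nondecr k : lam k.+1 <= lam k.+2.
Proof. exact/le_newton_step/psi_newton_step_ge0. Qed.

Lemma newton_iter_stable k n : lam k.+1 = lam k -> lam (n + k) = lam k.
Proof. by move=> fixed_k; rewrite iterD iter_fix. Qed.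

Lemma newton_iter_shrinks k :
  lam k.+2 = lam k.+1 \/ (#|active (lam k.+1)| + k <= p)%N.
Proof.
elim: k => [|k [fixed_k|card_k]].
- by right; rewrite addn0 -[leqRHS]card_ord max_card.
- by left; rewrite [LHS]iterS fixed_k.
have sub_k : active (lam k.+2) \subset active (lam k.+1).
  exact: active_antitone (newton_iter_ge0 _) (newton_iter_nondecr _).
case: (eqVneq (active (lam k.+2)) (active (lam k.+1))) => [eqA|neqA].
  by left; exact: eq_newton_step eqA.
right; apply: leq_trans card_k; rewrite addnS ltn_add2r proper_card //.
by rewrite properEneq neqA.
Qed.

Lemma newton_iter_fixed : lam p.+2 = lam p.+1.
Proof.
have [//|] := newton_iter_shrinks p.
rewrite -[leqRHS]add0n leq_add2r leqn0 => /eqP/cards0_eq active0.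
have step0 : lam p.+2 = 0.
  by rewrite [LHS]iterS /newton_step active0 /intercept big_set0 oppr0 mul0r.
by apply/eqP; rewrite eq_le newton_iter_nondecr step0 newton_iter_ge0.
Qed.

Lemma newton_iter_const k : (p < k)%N -> lam k = lam p.+1.
Proof. by move=> /subnK <-; apply: newton_iter_stable newton_iter_fixed. Qed.

End SemismoothNewton.

Theorem proposition3 (R : realType) (p q : nat) (hp : (0 < p)%N) (hq : (0 < q)%N)
    (z : 'cV[R]_p) (w : 'cV[R]_q)
    (hzpos : ~ (forall i : 'I_p, enorm w <= vpos z i 0))
    (hzneg : dotv (vneg z) (@onesv R p) < enorm w)
    (lam0 : R) (hlam0 : 0 < lam0) :
  (forall k : nat,
      0 <= newton_seq z (enorm w) lam0 k /\
      ncoef z (enorm w) (newton_seq z (enorm w) lam0 k) != 0) /\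
  exists lstar : R,
    [/\ 0 < lstar,
        lstar * enorm w =
          dotv (@onesv R p) (vneg ((lstar + 1) *: z - enorm w *: @onesv R p)),
        (forall l : R, 0 < l ->
           l * enorm w = dotv (@onesv R p) (vneg ((l + 1) *: z - enorm w *: @onesv R p)) ->
           l = lstar)
      & forall k : nat, (2 ^ p <= k)%N -> newton_seq z (enorm w) lam0 k = lstar].
Proof.
set c := enorm w.
have c_ge0 : 0 <= c := sqrtr_ge0 _.
have slope_lt0 := slope_lt0_of_vneg hzneg.
have [i0 zi0_lt] := exists_lt_of_not_vpos_ge hzpos.
have lam0_ge0 := ltW hlam0.
have root_psi l :
    l * c = dotv (onesv R p) (vneg ((l + 1) *: z - c *: onesv R p)) <-> psi z c l = 0.
  by rewrite /psi; split=> ?; lra.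
have iter_ge0 := newton_iter_ge0 c_ge0 slope_lt0 lam0_ge0.
set lstar := iter p.+1 (newton_step z c) lam0.
have psi_lstar : psi z c lstar = 0.
  exact/(psi_eq0_of_fixed slope_lt0)/(newton_iter_fixed c_ge0 slope_lt0 lam0_ge0).
split=> [k|]; first by rewrite newton_seqE ncoefE iter_ge0 ltr0_neq0.
exists lstar; split.
- by rewrite -(ltr_psi slope_lt0) psi_lstar (psi0_gt0 zi0_lt).
- exact/root_psi.
- by move=> l _ /root_psi psi_l; apply: (psi_inj slope_lt0); rewrite psi_l psi_lstar.
- move=> k pow_le; rewrite newton_seqE (newton_iter_const c_ge0 slope_lt0 lam0_ge0) //.
  exact: leq_trans (ltn_expl _ _) pow_le.
Qed.
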